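(* Let $N_{\mathsf s}\ge1$ be a fixed integer, $\beta\in(0,\infty)$, and for each integer $N_{\mathsf h}\ge1$ set $N=N_{\mathsf s}N_{\mathsf h}$ and let $K=K_N$ be a positive integer with $K_N/N\to\beta$ as $N_{\mathsf h}\to\infty$. Let $\boldsymbol{S}\in\mathbb{R}^{N\times K}$ have independent columns, each an $(N_{\mathsf s},N_{\mathsf h})$-sequence. Then the normalized rank $r_N:=\frac1N\operatorname{rank}\boldsymbol{S}$ satisfies, in probability, the asymptotic upper bound \[ r\le \min\{\beta,\,1-e^{-N_{\mathsf s}\beta}\}, \] that is, for every $\varepsilon>0$, $\Pr\big(r_N>\min\{\beta,1-e^{-N_{\mathsf s}\beta}\}+\varepsilon\big)\to0$ as $N\to\infty$.
   Context: An $(N_{\mathsf s},N_{\mathsf h})$-sequence is a random vector $\boldsymbol{s}\in\mathbb{R}^N$, $N=N_{\mathsf s}N_{\mathsf h}$, such that for each $m=1,\dots,N_{\mathsf s}$ the block $(s_{1+(m-1)N_{\mathsf h}},\dots,s_{mN_{\mathsf h}})$ has exactly one nonzero entry, whose position within the block is uniform and whose value is $\pm1/\sqrt{N_{\mathsf s}}$ with equal probability, all these choices being independent across blocks (so $\|\boldsymbol{s}\|=1$). *)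

From HB Require Import structures.
From mathcomp Require Import all_boot all_order all_algebra.
From mathcomp Require Import all_classical all_reals all_analysis.
Set Implicit Arguments. Unset Strict Implicit. Unset Printing Implicit Defensive.
Import Order.TTheory GRing.Theory Num.Theory.
Local Open Scope ring_scope.

(* An outcome of the random choices for a matrix with K columns, each an
   (Ns,Nh)-sequence: for each column k and each block m, the position
   (in 'I_Nh) of the nonzero entry and its sign (true = +, false = -). *)
Definition outcome (Ns Nh K : nat) : finType :=
  {ffun 'I_K -> {ffun 'I_Ns -> 'I_Nh * bool}}.

(* The matrix S in R^{N x K}, N = Ns*Nh. Row index i = m*Nh + j is entry j
   of block m. Column k has, in block m, the value +-1/sqrt(Ns) at the
   chosen position and 0 elsewhere. *)
Definition seqmx (R : realType) (Ns Nh K : nat) (w : outcome Ns Nh K)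
  : 'M[R]_(Ns * Nh, K) :=
  \matrix_(i, k) \sum_(m < Ns)
     (if (nat_of_ord i == m * Nh + (w k m).1)%N
      then (if (w k m).2 then 1 else -1) / Num.sqrt (Ns%:R)
      else 0).

(* Probability under the uniform distribution on outcomes, i.e. all
   positions and signs independent and uniform (independent columns). *)
Definition prob (R : realType) (Ns Nh K : nat) (E : pred (outcome Ns Nh K)) : R :=
  (#|E|%:R) / (#|outcome Ns Nh K|%:R).

Definition normrank (R : realType) (Ns Nh K : nat) (w : outcome Ns Nh K) : R :=
  (\rank (seqmx R w))%:R / (Ns * Nh)%:R.

From HB Require Import structures.
From mathcomp Require Import all_boot all_order all_algebra.
From mathcomp Require Import all_classical all_reals all_analysis.
From mathcomp Require Import ring lra.
Import Order.TTheory GRing.Theory Num.Theory.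
Import numFieldNormedType.Exports.

Set Implicit Arguments. Unset Strict Implicit. Unset Printing Implicit Defensive.
Local Open Scope ring_scope.

(* The rank of S is at most K and at most the number of nonzero rows of S, and a
   row is zero as soon as all K columns avoid it.  A column avoids a given row with probability
   a = 1 - 1/Nh and two given rows with probability at most a^2, so the number Z of
   zero rows has mean N a^K and variance at most N a^K, and by Chebyshev Z/N is
   concentrated above a^K - eps.  Finally a^K >= exp(-K/(Nh-1)) -> exp(-Ns beta). *)

Lemma card_ffun_family (I X : finType) (G : I -> pred X) :
  #|[set t : {ffun I -> X} | [forall i, t i \in G i]]| = (\prod_i #|G i|)%N.
Proof.
rewrite (@eq_card _ _ (family G)) => [|t]; last by rewrite !inE.
by rewrite card_family foldrE big_map big_enum.
Qed.

Lemma natr_card (R : pzSemiRingType) (T : finType) (P : pred T) :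
  #|P|%:R = \sum_x (x \in P)%:R :> R.
Proof.
rewrite -sum1_card natr_sum big_mkcond /=; apply: eq_bigr => x _.
by case: (x \in P).
Qed.

Lemma card_lt_sub_mul_sqr_le (R : realFieldType) (T : finType) (f : T -> R) (mu t : R) :
  0 < t -> #|[pred x | f x < mu - t]|%:R * t ^+ 2 <= \sum_x (f x - mu) ^+ 2.
Proof.
move=> t_gt0; rewrite natr_card mulr_suml; apply: ler_sum => x _.
rewrite inE /=; case: ltP => [fx_lt|_]; last by rewrite mul0r sqr_ge0.
by rewrite mul1r; nra.
Qed.

Lemma forallb_and (T : finType) (P Q : pred T) :
  [forall x, P x && Q x] = [forall x, P x] && [forall x, Q x].
Proof.
apply/forallP/andP => [PQ|[/forallP Px /forallP Qx] x]; last by rewrite Px Qx.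
by split; apply/forallP => x; case/andP: (PQ x).
Qed.

Section AllInCount.
Variables (T : finType) (n K : nat) (A : 'I_n -> {set T}).

Definition allin_count (w : {ffun 'I_K -> T}) : nat :=
  #|[pred i | [forall k, w k \in A i]]|.

Lemma card_allin (B : {set T}) :
  #|[set w : {ffun 'I_K -> T} | [forall k, w k \in B]]| = (#|B| ^ K)%N.
Proof. by rewrite (card_ffun_family (fun=> mem B)) prod_nat_const card_ord. Qed.

Variable R : realFieldType.

Lemma sum_allin_count :
  \sum_w (allin_count w)%:R = \sum_i (#|A i| ^ K)%N%:R :> R.
Proof.
under eq_bigr => w _ do rewrite /allin_count natr_card.
rewrite exchange_big /=; apply: eq_bigr => i _.
by rewrite -card_allin natr_card; apply: eq_bigr => w _; rewrite !inE.
Qed.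

Lemma sum_allin_count_sqr :
  \sum_w (allin_count w)%:R ^+ 2 =
  \sum_i \sum_j (#|A i :&: A j| ^ K)%N%:R :> R.
Proof.
under eq_bigr => w _ do rewrite /allin_count natr_card expr2 mulr_suml.
rewrite exchange_big /=; apply: eq_bigr => i _.
under eq_bigr => w _ do rewrite mulr_sumr.
rewrite exchange_big /=; apply: eq_bigr => j _.
rewrite -card_allin natr_card; apply: eq_bigr => w _.
rewrite !inE -natrM mulnb -forallb_and.
by congr (nat_of_bool _)%:R; apply: eq_forallb => k; rewrite inE.
Qed.

Variable a : R.
Hypothesis card_A : forall i, #|A i|%:R = a * #|T|%:R.
Hypothesis card_AI : forall i j, i != j -> #|A i :&: A j|%:R <= a ^+ 2 * #|T|%:R.

Let W : R := (#|T| ^ K)%N%:R.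

Lemma sum_allin_count_eq : \sum_w (allin_count w)%:R = W * (n%:R * a ^+ K).
Proof.
rewrite sum_allin_count.
under eq_bigr => i _ do rewrite natrX card_A exprMn -natrX.
by rewrite sumr_const card_ord -mulr_natl /W; ring.
Qed.

Lemma sum_allin_count_sqr_le :
  \sum_w (allin_count w)%:R ^+ 2 <= W * (n%:R * a ^+ K + (n%:R * a ^+ K) ^+ 2).
Proof.
rewrite sum_allin_count_sqr.
have cardK_AI i j : (#|A i :&: A j| ^ K)%N%:R <=
    (if j == i then W * a ^+ K else 0) + W * (a ^+ 2) ^+ K.
  rewrite natrX /W natrX -exprMn; case: eqP => [->|/eqP ji].
    by rewrite finset.setIid card_A mulrC exprMn lerDl mulr_ge0 // exprn_ge0 // sqr_ge0.
  have ij : i != j by rewrite eq_sym.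
  rewrite add0r mulrC -exprMn lerXn2r ?nnegrE ?(card_AI ij) //.
  exact: le_trans (card_AI ij).
apply: le_trans (ler_sum _ (fun i _ => ler_sum _ (fun j _ => cardK_AI i j))) _.
rewrite -exprM mulnC exprM.
have inner i : \sum_(j < n) ((if j == i then W * a ^+ K else 0) + W * a ^+ K ^+ 2)
    = W * a ^+ K + W * a ^+ K ^+ 2 *+ n.
  by rewrite big_split /= -big_mkcond big_pred1_eq sumr_const card_ord.
rewrite (eq_bigr _ (fun i _ => inner i)) sumr_const card_ord.
rewrite le_eqVlt; apply/orP; left; apply/eqP; move: (a ^+ K) W => x w; ring.
Qed.

Lemma card_allin_count_lt (t : R) : 0 < t ->
  #|[pred w | (allin_count w)%:R < n%:R * a ^+ K - t]|%:R * t ^+ 2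
  <= W * (n%:R * a ^+ K).
Proof.
move=> t_gt0; apply: le_trans (card_lt_sub_mul_sqr_le _ _ t_gt0) _.
set mu := n%:R * a ^+ K.
have expand w : ((allin_count w)%:R - mu) ^+ 2 =
    (allin_count w)%:R ^+ 2 - 2 * mu * (allin_count w)%:R + mu ^+ 2 by ring.
rewrite (eq_bigr _ (fun w _ => expand w)) big_split big_split /= sumrN -mulr_sumr.
rewrite sumr_const sum_allin_count_eq card_ffun card_ord -[mu ^+ 2 *+ _]mulr_natr -/W.
have := sum_allin_count_sqr_le; rewrite -/mu; lra.
Qed.

End AllInCount.

Lemma mxrank_le_card_nonzero_rows (F : fieldType) m n (A : 'M[F]_(m, n)) :
  (\rank A <= #|[pred i | row i A != 0%R]|)%N.
Proof.
set P := [pred i | row i A != 0].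
have sub : (A <= \sum_(i in P) <<row i A>>)%MS.
  apply/row_subP => i; have [Pi|] := boolP (i \in P).
    by rewrite (sumsmx_sup i) ?genmxE.
  by rewrite inE negbK => /eqP ->; exact: sub0mx.
apply: leq_trans (mxrankS sub) _; apply: leq_trans (mxrank_sum_leqif _) _.
by rewrite -sum1_card; apply: leq_sum => i _; rewrite /= mxrank_gen rank_leq_row.
Qed.

Lemma prod_sub_onehot (R : comNzRingType) (n j : nat) (c : R) : (j < n)%N ->
  \prod_(m < n) (1 - (m == j :> nat)%:R * c) = 1 - c.
Proof.
move=> lt_jn; rewrite (bigD1 (Ordinal lt_jn)) //= eqxx mul1r big1 ?mulr1 // => m.
by rewrite -val_eqE /= => /negbTE ->; rewrite mul0r subr0.
Qed.

Definition avoid_row (Ns Nh : nat) (i : 'I_(Ns * Nh)) : {set {ffun 'I_Ns -> 'I_Nh * bool}} :=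
  [set t : {ffun 'I_Ns -> 'I_Nh * bool} | [forall m : 'I_Ns, (m * Nh + (t m).1 != i)%N]].

Lemma row_seqmx_eq0 (R : realType) Ns Nh K (w : outcome Ns Nh K) (i : 'I_(Ns * Nh)) :
  [forall k, w k \in avoid_row i] -> row i (seqmx R w) = 0.
Proof.
move=> /forallP w_avoid; apply/rowP => k; rewrite !mxE; apply: big1 => m _.
by move: (w_avoid k); rewrite inE => /forallP/(_ m); rewrite eq_sym => /negbTE ->.
Qed.

Lemma rank_seqmx_le (R : realType) Ns Nh K (w : outcome Ns Nh K) :
  (\rank (seqmx R w) + allin_count (@avoid_row Ns Nh) w <= Ns * Nh)%N.
Proof.
set zero_rows := [pred i | [forall k, w k \in avoid_row i]].
rewrite /allin_count -/zero_rows -[X in (_ <= X)%N]card_ord -(cardC zero_rows) addnC.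
rewrite leq_add2l.
apply: leq_trans (mxrank_le_card_nonzero_rows _) (subset_leq_card _).
by apply/fintype.subsetP => i; rewrite !inE; apply: contra => /row_seqmx_eq0 ->.
Qed.

Lemma card_block_hit (Nh m i : nat) : (0 < Nh)%N ->
  #|[pred p : 'I_Nh * bool | (m * Nh + p.1 == i)%N]| = ((m == i %/ Nh) * 2)%N.
Proof.
move=> Nh_gt0.
have hit_eq (j : 'I_Nh) : (m * Nh + j == i)%N = ((m == i %/ Nh) && (j == i %% Nh :> nat))%N.
  apply/eqP/andP => [<-|[/eqP -> /eqP ->]]; last by rewrite -divn_eq.
  by rewrite divnMDl // divn_small // addn0 modnMDl modn_small.
have [m_eq|/negbTE m_neq] := eqVneq m (i %/ Nh)%N; last first.
  by apply: eq_card0 => p; rewrite inE hit_eq m_neq.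
have lt_mod : (i %% Nh < Nh)%N by rewrite ltn_mod.
rewrite (@eq_card _ _ (finset.setX [set Ordinal lt_mod] [set: bool])) => [|[j b]].
  by rewrite cardsX cards1 cardsT card_bool.
by rewrite !inE hit_eq m_eq eqxx -val_eqE andbT.
Qed.

Lemma card_block_avoid (R : numFieldType) (Nh m i : nat) : (0 < Nh)%N ->
  #|[pred p : 'I_Nh * bool | (m * Nh + p.1 != i)%N]|%:R
  = (Nh * 2)%:R * (1 - (m == i %/ Nh)%N%:R / Nh%:R) :> R.
Proof.
move=> Nh_gt0; set hit := [pred p : 'I_Nh * bool | (m * Nh + p.1 == i)%N].
have := cardC hit; rewrite card_block_hit // card_prod card_ord card_bool.
move=> /(congr1 (fun k => k%:R : R)); rewrite natrD => card_eq.
rewrite (@eq_card _ _ [predC hit]) => [|p]; last by rewrite !inE.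
have -> : #|[predC hit]|%:R = (Nh * 2)%:R - ((m == i %/ Nh)%N * 2)%:R :> R.
  by rewrite -card_eq addrC addKr.
have Nh_neq0 : Nh%:R != 0 :> R by rewrite pnatr_eq0 -lt0n.
by rewrite !natrM; field.
Qed.

Lemma card_block_avoid2 (R : numFieldType) (Nh m i i' : nat) : (0 < Nh)%N -> i != i' ->
  #|[pred p : 'I_Nh * bool | (m * Nh + p.1 != i) && (m * Nh + p.1 != i')]|%:R
  = (Nh * 2)%:R *
    (1 - (m == i %/ Nh)%N%:R / Nh%:R - (m == i' %/ Nh)%N%:R / Nh%:R) :> R.
Proof.
move=> Nh_gt0 neq_ii'.
set hit := [pred p : 'I_Nh * bool | (m * Nh + p.1 == i)%N].
set hit' := [pred p : 'I_Nh * bool | (m * Nh + p.1 == i')%N].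
have := cardUI hit hit'; rewrite (@eq_card0 _ [predI hit & hit']) => [|p]; last first.
  by rewrite !inE; apply: contraNF neq_ii' => /andP[/eqP <- /eqP <-].
rewrite addn0 => cardU_eq.
have := cardC [predU hit & hit']; rewrite cardU_eq !card_block_hit //.
rewrite card_prod card_ord card_bool => /(congr1 (fun k => k%:R : R)).
rewrite !natrD => card_eq.
rewrite (@eq_card _ _ [predC [predU hit & hit']]) => [|p]; last first.
  by rewrite !inE negb_or.
have -> : #|[predC [predU hit & hit']]|%:R = (Nh * 2)%:R
    - ((m == i %/ Nh)%N * 2)%:R - ((m == i' %/ Nh)%N * 2)%:R :> R.
  by rewrite -card_eq; ring.
have Nh_neq0 : Nh%:R != 0 :> R by rewrite pnatr_eq0 -lt0n.
by rewrite !natrM; field.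
Qed.

Lemma card_avoid_row (R : numFieldType) Ns Nh (i : 'I_(Ns * Nh)) : (0 < Nh)%N ->
  #|avoid_row i|%:R = (1 - Nh%:R^-1) * #|{ffun 'I_Ns -> 'I_Nh * bool}|%:R :> R.
Proof.
move=> Nh_gt0; pose G (m : 'I_Ns) := [pred p : 'I_Nh * bool | (m * Nh + p.1 != i)%N].
have -> : avoid_row i = [set t : {ffun _ -> _} | [forall m, t m \in G m]].
  by apply/setP => t; rewrite !inE.
rewrite card_ffun_family natr_prod card_ffun card_prod card_ord card_bool natrX.
under eq_bigr => m _ do rewrite card_block_avoid //.
by rewrite big_split prodr_const card_ord /= prod_sub_onehot ?ltn_divLR // mulrC.
Qed.

Lemma card_avoid_rowI (R : numFieldType) Ns Nh (i i' : 'I_(Ns * Nh)) : (0 < Nh)%N -> i != i' ->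
  #|avoid_row i :&: avoid_row i'|%:R
  <= (1 - Nh%:R^-1) ^+ 2 * #|{ffun 'I_Ns -> 'I_Nh * bool}|%:R :> R.
Proof.
move=> Nh_gt0 neq_ii'.
pose G (m : 'I_Ns) := [pred p : 'I_Nh * bool | (m * Nh + p.1 != i) && (m * Nh + p.1 != i')]%N.
have -> : avoid_row i :&: avoid_row i' = [set t : {ffun _ -> _} | [forall m, t m \in G m]].
  by apply/setP => t; rewrite !inE forallb_and.
rewrite card_ffun_family natr_prod card_ffun card_prod !card_ord card_bool natrX.
have neq_nat : (i : nat) != i' by [].
under eq_bigr => m _ do rewrite (card_block_avoid2 _ _ Nh_gt0 neq_nat).
rewrite big_split prodr_const card_ord /= [X in _ <= X]mulrC ler_wpM2l //.
have lt_div (j : 'I_(Ns * Nh)) : (j %/ Nh < Ns)%N by rewrite ltn_divLR.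
rewrite expr2 -{1}(prod_sub_onehot _ (lt_div i)) -(prod_sub_onehot _ (lt_div i')).
rewrite -big_split /=; apply: ler_prod => m _.
have := card_block_avoid2 R m Nh_gt0 neq_nat.
set x := _%:R / Nh%:R; set x' := _%:R / Nh%:R => card_eq.
have N2_gt0 : 0 < (Nh * 2)%:R :> R by rewrite ltr0n muln_gt0 Nh_gt0.
have f_ge0 : 0 <= 1 - x - x' by rewrite -(pmulr_rge0 _ N2_gt0) -card_eq.
rewrite f_ge0 -subr_ge0 (_ : _ - _ = x * x'); last by ring.
by rewrite mulr_ge0 // divr_ge0.
Qed.

Local Open Scope classical_set_scope.
Local Open Scope ring_scope.

Lemma cvg_inv_natr_subn (R : realType) (k : nat) :
  (fun n : nat => (n%:R - k%:R)^-1 : R) @ \oo --> 0.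
Proof.
rewrite -(cvg_shiftn k.+1) (eq_cvg _ _ (g := harmonic)); first exact: cvg_harmonic.
by move=> n; rewrite /= natrD -addrA -natrB // subSnn natr1.
Qed.

Lemma cvg_div_natrM (R : realType) (c : R) (k : nat) :
  (fun n : nat => c / (k * n)%:R) @ \oo --> 0.
Proof.
have : (fun n : nat => c / k%:R * (n%:R - 0%:R)^-1) @ \oo --> c / k%:R * 0.
  by apply: cvgMl_tmp; exact: cvg_inv_natr_subn.
rewrite mulr0 (eq_cvg _ _ (g := fun n : nat => c / (k * n)%:R)) => [//|n].
by rewrite subr0 natrM invfM mulrA.
Qed.

Lemma expRN_le_inv1D (R : realType) (y : R) : 0 <= y -> expR (- y) <= (1 + y)^-1.
Proof.
move=> y_ge0; rewrite expRN lef_pV2 ?posrE ?expR_gt0 ?ltr_pwDl //.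
exact: expR_ge1Dx.
Qed.

Lemma expR_le_pow_sub_inv (R : realType) (Nh K : nat) : (1 < Nh)%N ->
  expR (- (K%:R * (Nh%:R - 1)^-1)) <= (1 - Nh%:R^-1) ^+ K :> R.
Proof.
move=> Nh_gt1; have Nh1_gt0 : 0 < Nh%:R - 1 :> R by rewrite subr_gt0 ltr1n.
have Nh_gt0 : 0 < Nh%:R :> R by rewrite ltr0n ltnW.
rewrite -mulrN expRM_natl; apply: lerXn2r; rewrite ?nnegrE ?expR_ge0 //.
  by rewrite subr_ge0 invf_le1 // ler1n ltnW.
rewrite (_ : 1 - Nh%:R^-1 = (1 + (Nh%:R - 1)^-1)^-1).
  by rewrite expRN_le_inv1D // invr_ge0 ltW.
by field; rewrite subrK !gt_eqF.
Qed.

Lemma near_lt_pow_sub_inv (R : realType) (Ns : nat) (beta z : R) (K : nat -> nat) :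
  (0 < Ns)%N -> (fun n => (K n)%:R / (Ns * n)%:R : R) @ \oo --> beta ->
  z < expR (- (Ns%:R * beta)) -> \forall n \near \oo, z < (1 - n%:R^-1) ^+ K n.
Proof.
move=> Ns_gt0 cvgK z_lt.
(* [v n] is [K n / (n - 1)] for [n > 1], written so that its limit is evident. *)
pose v n : R := Ns%:R * ((K n)%:R / (Ns * n)%:R) * (1 + (n%:R - 1%:R)^-1).
have cvg_v : v @ \oo --> Ns%:R * beta * (1 + 0).
  apply: cvgM; first exact: cvgMl_tmp.
  by apply: cvgD; [exact: cvg_cst | exact: cvg_inv_natr_subn _ 1].
rewrite addr0 mulr1 in cvg_v.
have cvg_exp : (fun n => expR (- v n)) @ \oo --> expR (- (Ns%:R * beta)).
  by apply: continuous_cvg; [exact: continuous_expR | exact: cvgN].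
have expR_gt := cvgr_gt _ cvg_exp _ z_lt; near=> n.
have n_gt1 : (1 < n)%N by near: n; exact: nbhs_infty_gt.
apply: lt_le_trans (_ : expR (- v n) <= _); first by near: n; exact: expR_gt.
suff -> : v n = (K n)%:R * (n%:R - 1)^-1 by exact: expR_le_pow_sub_inv.
have n1_gt0 : 0 < n%:R - 1 :> R by rewrite subr_gt0 ltr1n.
have n_gt0 : 0 < n%:R :> R by rewrite ltr0n ltnW.
have Ns_neq0 : Ns%:R != 0 :> R by rewrite pnatr_eq0 -lt0n.
by rewrite /v natrM; field; rewrite Ns_neq0 !gt_eqF.
Unshelve. all: end_near.
Qed.

Lemma allin_count_lt_of_normrank_gt (R : realType) Ns Nh K (beta eps : R)
    (w : outcome Ns Nh K) :
  (0 < Ns)%N -> (0 < Nh)%N ->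
  K%:R / (Ns * Nh)%:R <= beta + eps ->
  expR (- (Ns%:R * beta)) - eps / 2 <= (1 - Nh%:R^-1) ^+ K ->
  Num.min beta (1 - expR (- (Ns%:R * beta))) + eps < normrank R w ->
  (allin_count (@avoid_row Ns Nh) w)%:R
  < (Ns * Nh)%:R * (1 - Nh%:R^-1) ^+ K - (Ns * Nh)%:R * eps / 2.
Proof.
move=> Ns_gt0 Nh_gt0 K_le exp_le r_gt.
have N_gt0 : 0 < (Ns * Nh)%:R :> R by rewrite ltr0n muln_gt0 Ns_gt0.
have r_le_K : normrank R w <= K%:R / (Ns * Nh)%:R.
  by rewrite /normrank ler_pM2r ?invr_gt0 // ler_nat rank_leq_col.
have r_le_Z : normrank R w <=
    ((Ns * Nh)%:R - (allin_count (@avoid_row Ns Nh) w)%:R) / (Ns * Nh)%:R.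
  by rewrite /normrank ler_pM2r ?invr_gt0 // lerBrDr -natrD ler_nat rank_seqmx_le.
move: r_gt; set e := expR _; have [_ r_gt|_ r_gt] := leP beta (1 - e); first lra.
have := lt_le_trans r_gt r_le_Z; rewrite ltr_pdivlMr //.
have := ler_wpM2l (ltW N_gt0) exp_le; rewrite -/e; lra.
Qed.

Lemma prob_normrank_gt_le (R : realType) Ns Nh K (beta eps : R) :
  (0 < Ns)%N -> (0 < Nh)%N -> 0 < eps ->
  K%:R / (Ns * Nh)%:R <= beta + eps ->
  expR (- (Ns%:R * beta)) - eps / 2 <= (1 - Nh%:R^-1) ^+ K ->
  prob R (fun w : outcome Ns Nh K =>
    Num.min beta (1 - expR (- (Ns%:R * beta))) + eps < normrank R w)
  <= 4 / eps ^+ 2 / (Ns * Nh)%:R.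
Proof.
move=> Ns_gt0 Nh_gt0 eps_gt0 K_le exp_le.
set N : R := (Ns * Nh)%:R; set a : R := 1 - Nh%:R^-1.
have N_gt0 : 0 < N by rewrite ltr0n muln_gt0 Ns_gt0.
have t_gt0 : 0 < N * eps / 2 by rewrite !mulr_gt0.
have := card_allin_count_lt K (fun i : 'I_(Ns * Nh) => card_avoid_row R i Nh_gt0)
  (fun i j => card_avoid_rowI R Nh_gt0) t_gt0.
rewrite -/N -/a; set P := [pred w | _]; move=> P_le.
have a_ge0 : 0 <= a by rewrite subr_ge0 invf_le1 ?ler1n ?ltr0n.
have aK_le1 : a ^+ K <= 1 by rewrite exprn_ile1 // gerBl invr_ge0.
have W_gt0 : 0 < (#|{ffun 'I_Ns -> 'I_Nh * bool}| ^ K)%:R :> R.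
  by rewrite ltr0n expn_gt0 card_ffun expn_gt0 card_prod card_ord card_bool muln_gt0 Nh_gt0.
rewrite /prob card_ffun card_ord ler_pdivrMr //.
rewrite -(ler_pM2r (exprn_gt0 2 t_gt0)); apply: le_trans (le_trans _ P_le) _.
  rewrite ler_pM2r ?exprn_gt0 // ler_nat.
  apply/subset_leq_card/fintype.subsetP => w; rewrite !inE.
  exact: allin_count_lt_of_normrank_gt.
set W := (_ ^ K)%:R in W_gt0 *.
rewrite (_ : _ * W * _ = W * N); last first.
  by field; rewrite !pnatr_eq0 -!lt0n Nh_gt0 Ns_gt0 gt_eqF.
by rewrite ler_wpM2l ?(ltW W_gt0) // ler_piMr // ltW.
Qed.

Unset Implicit Arguments.

Theorem theorem2 (R : realType) (Ns : nat) (beta : R) (K : nat -> nat) :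
  (0 < Ns)%N -> 0 < beta ->
  (forall Nh : nat, (0 < Nh)%N -> (0 < K Nh)%N) ->
  (fun Nh : nat => ((K Nh)%:R / (Ns * Nh)%:R : R)) @ \oo --> beta ->
  forall eps : R, 0 < eps ->
  (fun Nh : nat =>
     prob R (fun w : outcome Ns Nh (K Nh) =>
       Num.min beta (1 - expR (- (Ns%:R * beta))) + eps < normrank R w))
    @ \oo --> (0 : R).
Proof.
move=> Ns_gt0 _ _ cvgK eps eps_gt0.
apply: (squeeze_cvgr _ (cvg_cst 0) (cvg_div_natrM (4 / eps ^+ 2) Ns)); near=> n.
rewrite /prob divr_ge0 //=; apply: prob_normrank_gt_le => //.
- by near: n; exact: nbhs_infty_gt.
- by near: n; apply: (cvgr_le _ cvgK); rewrite ltrDl.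
- near: n; set z := expR _ - _.
  apply: filterS (near_lt_pow_sub_inv (z := z) Ns_gt0 cvgK _) => [n /ltW //|].
  by rewrite gtrBl divr_gt0.
Unshelve. all: end_near.
Qed.
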